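(* Let $\mathfrak g$ be a semisimple Lie algebra of $r\times r$ matrices, identified with its dual via the trace form, $N\ge2$, and let $P$ and $R$ be the Poisson tensors on $\mathfrak g^N$ described in the context. For $2\le l\le N$ put $B_l=\sum_{i=1}^{l-1}A_i$ and, for integers $\beta\ge2$ and $\alpha$, let $F^{(\alpha)}_{\beta,l}=\mathrm{res}_{\lambda=0}\lambda^{-\alpha-1}(\lambda A_l+B_l)^\beta$ (the coefficient of $\lambda^\alpha$ in $(\lambda A_l+B_l)^\beta$) and $H^{(\alpha)}_{\beta,l}=\mathrm{Tr}(F^{(\alpha)}_{\beta,l})$. Then for $\alpha=1,\dots,\beta$, $$P\,dH^{(\alpha-1)}_{\beta,l}=\big(R-(l-2)P\big)\,dH^{(\alpha)}_{\beta,l}.$$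
   Context: For $F$ smooth on $\mathfrak g^N\ni(A_1,\dots,A_N)$, $\partial F/\partial A_i\in\mathfrak g$ is the gradient with respect to the trace form: $F(\dots,A_i+t\Xi,\dots)=F+t\,\mathrm{Tr}(\frac{\partial F}{\partial A_i}\Xi)+o(t)$ for all $\Xi\in\mathfrak g$. The diagonal tensor $P$: $(P\,dF)_i=[A_i,\partial F/\partial A_i]$. The tensor $R$: $(R\,dF)_i=[(i-1)A_i-\sum_{k=1}^{i-1}A_k,\partial F/\partial A_i]+\sum_{j\ne i}[A_{\min(i,j)},\partial F/\partial A_j]$, $i=1,\dots,N$. Here $dF$ is identified with the $N$-tuple $(\partial F/\partial A_1,\dots,\partial F/\partial A_N)$. *)

From HB Require Import structures.
From mathcomp Require Import all_boot all_order all_algebra.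
Set Implicit Arguments. Unset Strict Implicit. Unset Printing Implicit Defensive.
Import Order.TTheory GRing.Theory Num.Theory.
Local Open Scope ring_scope.

Section Defs.
Variables (K : fieldType) (r : nat).
Notation M := ('M[K]_(r, r)).

Definition lie (x y : M) : M := x *m y - y *m x.

Definition lie_subalgebra (g : {vspace M}) : Prop :=
  forall x y, x \in g -> y \in g -> lie x y \in g.

Definition lie_ideal (g I : {vspace M}) : Prop :=
  (I <= g)%VS /\ forall x y, x \in g -> y \in I -> lie x y \in I.

(* semisimple: no nonzero abelian ideal (equivalently, no nonzero solvable ideal) *)
Definition semisimple (g : {vspace M}) : Prop :=
  forall I : {vspace M}, lie_ideal g I ->
    (forall x y, x \in I -> y \in I -> lie x y = 0) -> I = 0%VS.

(* the trace form is nondegenerate on g (g identified with its dual) *)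
Definition trace_nondeg (g : {vspace M}) : Prop :=
  forall x, x \in g -> (forall y, y \in g -> \tr (x *m y) = 0) -> x = 0.

(* Points of g^N are functions A : nat -> M, component i (1 <= i <= N) = A_i. *)
Definition upd (A : nat -> M) (i : nat) (X : M) : nat -> M :=
  fun k => if k == i then X else A k.

(* G = dF/dA_i at A w.r.t. the trace form: G in g, and for all Xi in g,
   t |-> F(.., A_i + t Xi, ..) is polynomial with linear coefficient Tr(G Xi),
   i.e. F(.., A_i + t Xi, ..) = F + t Tr(G Xi) + O(t^2). *)
Definition is_grad (g : {vspace M}) (F : (nat -> M) -> K) (A : nat -> M)
    (i : nat) (G : M) : Prop :=
  G \in g /\
  forall Xi, Xi \in g -> exists q : {poly K},
    (forall t : K, F (upd A i (A i + t *: Xi)) = q.[t]) /\ q`_1 = \tr (G *m Xi).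

(* dF at A identified with the N-tuple of gradients *)
Definition is_diff (g : {vspace M}) (N : nat) (F : (nat -> M) -> K)
    (A : nat -> M) (G : nat -> M) : Prop :=
  forall i, (1 <= i <= N)%N -> is_grad g F A i (G i).

Definition Pop (A G : nat -> M) (i : nat) : M := lie (A i) (G i).

Definition Rop (N : nat) (A G : nat -> M) (i : nat) : M :=
  lie ((i.-1)%:R *: A i - \sum_(1 <= k < i) A k) (G i)
  + \sum_(1 <= j < N.+1 | j != i) lie (A (minn i j)) (G j).

Definition Bl (A : nat -> M) (l : nat) : M := \sum_(1 <= k < l) A k.

Definition Fab (l beta alpha : nat) (A : nat -> M) : M :=
  \matrix_(a < r, b < r)
    (((('X *: map_mx (@polyC K) (A l) + map_mx (@polyC K) (Bl A l))
        : 'M[{poly K}]_r) ^+ beta) a b)`_alpha.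

Definition Hab (l beta alpha : nat) (A : nat -> M) : K := \tr (Fab l beta alpha A).

End Defs.

(* Write P(lambda) = lambda A_l + B_l and W = P^(beta-1).  Moving A_i by t Xi
   moves P by t e_i Xi with e_l = lambda, e_i = 1 for i < l and e_i = 0 for
   i > l, so the gradient of H^(alpha) in the slot i is beta times the
   lambda^alpha-coefficient of e_i W, up to the trace-orthogonal complement of
   g.  Comparing coefficients in P W = W P gives
   [A_l, C_(m-1)] + [B_l, C_m] = 0 for the coefficients C_m of W, and with
   these relations the identity is a direct computation of R on vectors of the
   shape (C, ..., C, D, 0, ..., 0).  Brackets with elements of g preserve the
   trace-orthogonal complement of g, and the trace form is nondegenerate on g,
   so the identity transfers to the actual gradients. *)

From HB Require Import structures.
From mathcomp Require Import all_boot all_order all_algebra.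
From mathcomp Require Import zify.
Set Implicit Arguments. Unset Strict Implicit. Unset Printing Implicit Defensive.
Import Order.TTheory GRing.Theory Num.Theory.
Local Open Scope ring_scope.

Lemma addrBDB (V : zmodType) (a b c d : V) : (a - b) + (c - d) = (a + c) - (b + d).
Proof. by rewrite addrACA -opprD. Qed.

Lemma subrACA (V : zmodType) (a b c d : V) : (a - b) - (c - d) = (a - c) - (b - d).
Proof. by rewrite !opprD addrACA. Qed.

Lemma memv_residual (K : fieldType) (vT : vectType K) (V : {vspace vT}) (c : K)
    (p q s p' q' s' : vT) :
    p' = q' - c *: s' -> p - p' \in V -> q - q' \in V -> s - s' \in V ->
  p - (q - c *: s) \in V.
Proof.
move=> -> Vp Vq Vs.
have -> : p - (q - c *: s) = (p - (q' - c *: s')) - ((q - q') - c *: (s - s')).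
  by rewrite scalerBr [q - q' - _]subrACA [RHS]subrACA subrr subr0.
by rewrite memvB // memvB // memvZ.
Qed.

Section LieBracket.
Variables (K : fieldType) (r : nat).
Implicit Types (x y z : 'M[K]_r).

Fact lie_is_linear x : linear (lie x).
Proof.
move=> c y z; rewrite /lie mulmxDr mulmxDl -scalemxAl -scalemxAr.
by rewrite opprD addrACA scalerBr.
Qed.
HB.instance Definition _ x :=
  GRing.isLinear.Build K 'M[K]_r 'M[K]_r _ (lie x) (lie_is_linear x).

Lemma lieBl x y z : lie (x - y) z = lie x z - lie y z.
Proof. by rewrite /lie mulmxBl mulmxBr subrACA. Qed.

Lemma lie0r x : lie x 0 = 0.
Proof. exact: linear0. Qed.

Lemma lieDr x y z : lie x (y + z) = lie x y + lie x z.
Proof. exact: linearD. Qed.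

Lemma lieBr x y z : lie x (y - z) = lie x y - lie x z.
Proof. exact: linearB. Qed.

Lemma lieZr c x y : lie x (c *: y) = c *: lie x y.
Proof. exact: linearZ. Qed.

Lemma lieMnr x y n : lie x (y *+ n) = lie x y *+ n.
Proof. exact: linearMn. Qed.

Lemma lie_sumr (I : Type) (s : seq I) (P : pred I) (F : I -> 'M[K]_r) x :
  lie x (\sum_(j <- s | P j) F j) = \sum_(j <- s | P j) lie x (F j).
Proof. exact: linear_sum. Qed.

Lemma lieZl c x y : lie (c *: x) y = c *: lie x y.
Proof. by rewrite /lie -scalemxAl -scalemxAr scalerBr. Qed.

Lemma lie_suml (I : Type) (s : seq I) (P : pred I) (F : I -> 'M[K]_r) y :
  lie (\sum_(j <- s | P j) F j) y = \sum_(j <- s | P j) lie (F j) y.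
Proof. by rewrite /lie mulmx_suml mulmx_sumr -sumrB. Qed.

Lemma mxtrace_lie x y z : \tr (lie x y *m z) = \tr (y *m lie z x).
Proof.
rewrite /lie mulmxBl mulmxBr !raddfB /= -!mulmxA; congr (_ - _).
by rewrite mxtrace_mulC -mulmxA.
Qed.

End LieBracket.

Section MixedPowers.
Variables (R : comPzRingType) (n : nat) (P Q : 'M[R]_n).

(* [mixed_pow k m] is the sum of the words of length k in P and Q with exactly
   m letters Q. *)
Fixpoint mixed_pow (k m : nat) : 'M[R]_n :=
  if k is k.+1 then
    mixed_pow k m *m P + (if m is m.+1 then mixed_pow k m *m Q else 0)
  else if m == 0%N then 1 else 0.

Lemma mixed_pow_gt k m : (k < m)%N -> mixed_pow k m = 0.
Proof.
elim: k m => [|k IHk] [|m] //= lt_km.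
by rewrite IHk ?(ltnW lt_km) // IHk // !mul0mx addr0.
Qed.

Lemma mixed_pow0 k : mixed_pow k 0 = P ^+ k.
Proof. by elim: k => [|k IHk] //=; rewrite IHk addr0 exprSr mulmxE. Qed.

Lemma exprD_mixed_pow (c : R) k :
  (P + c *: Q) ^+ k = \sum_(m < k.+1) c ^+ m *: mixed_pow k m.
Proof.
elim: k => [|k IHk]; first by rewrite big_ord1 expr0 scale1r.
rewrite exprSr IHk -mulmxE mulmxDr !mulmx_suml /=.
under [RHS]eq_bigr do rewrite scalerDr.
rewrite big_split /=; congr (_ + _).
  rewrite [RHS]big_ord_recr /= mixed_pow_gt // mul0mx scaler0 addr0.
  by apply: eq_bigr => m _; rewrite scalemxAl.
rewrite [RHS]big_ord_recl /= scaler0 add0r; apply: eq_bigr => m _.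
by rewrite -scalemxAr -scalemxAl scalerA -exprS.
Qed.

Lemma mxtrace_mixed_pow1 k : \tr (mixed_pow k 1) = \tr (Q *m P ^+ k.-1) *+ k.
Proof.
suff gen j : \tr (mixed_pow k 1 *m P ^+ j) = \tr (Q *m P ^+ (k.-1 + j)) *+ k.
  by have := gen 0%N; rewrite expr0 mulmx1 addn0.
elim: k j => [|k IHk] j /=; first by rewrite mul0mx mxtrace0.
have cycle : \tr (P ^+ k *m Q *m P ^+ j) = \tr (Q *m P ^+ (k + j)).
  by rewrite -mulmxA mxtrace_mulC -mulmxA mulmxE -exprD addnC -mulmxE.
rewrite mulmxDl mxtraceD mixed_pow0 cycle -mulmxA mulmxE -exprS -mulmxE IHk.
by case: k {IHk cycle} => [|k]; rewrite ?mulr0n ?add0r ?mulr1n //= addSnnS [RHS]mulrSr.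
Qed.

End MixedPowers.

Section CoefficientMatrix.
Variable R : nzRingType.

Definition coefmx (k m n : nat) (X : 'M[{poly R}]_(m, n)) : 'M[R]_(m, n) :=
  map_mx (coefp k) X.
HB.instance Definition _ k m n :=
  GRing.Additive.copy (@coefmx k m n) (map_mx (coefp k)).

Lemma coefmx_polyCl k m n p (a : 'M[R]_(m, n)) (X : 'M[{poly R}]_(n, p)) :
  coefmx k (map_mx polyC a *m X) = a *m coefmx k X.
Proof.
apply/matrixP => i j; rewrite !mxE raddf_sum; apply: eq_bigr => h _ /=.
by rewrite !mxE coefCM.
Qed.

Lemma coefmx_polyCr k m n p (X : 'M[{poly R}]_(m, n)) (a : 'M[R]_(n, p)) :
  coefmx k (X *m map_mx polyC a) = coefmx k X *m a.
Proof.
apply/matrixP => i j; rewrite !mxE raddf_sum; apply: eq_bigr => h _ /=.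
by rewrite !mxE coefMC.
Qed.

Lemma coefmx_polyCZ k m n c (X : 'M[{poly R}]_(m, n)) :
  coefmx k (c%:P *: X) = c *: coefmx k X.
Proof. by apply/matrixP => i j; rewrite !mxE /= coefCM. Qed.

Lemma coefmx_XZ k m n (X : 'M[{poly R}]_(m, n)) :
  coefmx k.+1 ('X *: X) = coefmx k X.
Proof. by apply/matrixP => i j; rewrite !mxE /= coefXM. Qed.

Lemma mxtrace_coefmx k n (X : 'M[{poly R}]_n) : \tr (coefmx k X) = (\tr X)`_k.
Proof. by rewrite /mxtrace coef_sum; apply: eq_bigr => i _; rewrite mxE. Qed.

End CoefficientMatrix.

Lemma natr_inj_pchar0 (K : fieldType) : [pchar K] =i pred0 ->
  injective (fun n : nat => n%:R : K).
Proof.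
move=> /pcharf0P K0 m n /= eq_mn.
wlog le_mn : m n eq_mn / (m <= n)%N.
  by move=> wlog_mn; case/orP: (leq_total m n) => /wlog_mn-> //.
by apply/eqP; rewrite eqn_leq le_mn -subn_eq0 -K0 natrB // eq_mn subrr eqxx.
Qed.

Lemma horner_inj_pchar0 (K : fieldType) (p q : {poly K}) :
  [pchar K] =i pred0 -> (forall t, p.[t] = q.[t]) -> p = q.
Proof.
move=> K0 eq_pq; apply/eqP; rewrite -subr_eq0; apply/eqP.
apply: (@roots_geq_poly_eq0 _ _ [seq i%:R | i <- iota 0 (size (p - q))]).
- by apply/allP => t _; rewrite /root !hornerE eq_pq subrr.
- by rewrite map_inj_uniq ?iota_uniq //; apply: natr_inj_pchar0.
- by rewrite size_map size_iota.
Qed.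

Section TraceOrthogonal.
Variables (K : fieldType) (r : nat) (g : {vspace 'M[K]_r}).

Definition trace_coords (X : 'M[K]_r) : 'rV[K]_(\dim g) :=
  \row_k \tr (X *m (vbasis g)`_k).

Fact trace_coords_is_linear : linear trace_coords.
Proof.
by move=> c X Y; apply/rowP => k; rewrite !mxE mulmxDl mxtraceD -scalemxAl mxtraceZ.
Qed.
HB.instance Definition _ := GRing.isLinear.Build K 'M[K]_r 'rV[K]_(\dim g) _
  trace_coords trace_coords_is_linear.

Definition trace_orth : {vspace 'M[K]_r} := lker (linfun trace_coords).

Lemma trace_orthP X :
  reflect (forall Y, Y \in g -> \tr (X *m Y) = 0) (X \in trace_orth).
Proof.
rewrite memv_ker lfunE /=; apply: (iffP eqP) => [X0 Y /coord_vbasis -> | X0].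
  rewrite mulmx_sumr raddf_sum big1 //= => k _.
  move/rowP: X0 => /(_ k); rewrite !mxE => X0k.
  by rewrite -scalemxAr mxtraceZ X0k mulr0.
by apply/rowP => k; rewrite !mxE X0 // vbasis_mem ?mem_nth ?size_tuple.
Qed.

Lemma lie_trace_orth a X : lie_subalgebra g ->
  a \in g -> X \in trace_orth -> lie a X \in trace_orth.
Proof.
move=> g_lie ga /trace_orthP X0; apply/trace_orthP => Y gY.
by rewrite mxtrace_lie X0 // g_lie.
Qed.

Hypothesis g_nondeg : trace_nondeg g.

Lemma trace_orth_eq0 X : X \in g -> X \in trace_orth -> X = 0.
Proof. by move=> gX /trace_orthP; apply: g_nondeg. Qed.

Lemma trace_orth_decomp X : exists G, (G \in g) && (G - X \in trace_orth).
Proof.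
pose f := linfun trace_coords.
have g_inj : (g :&: lker f)%VS = 0%VS.
  apply/eqP; rewrite -subv0; apply/subvP => Y; rewrite memv_cap memv0.
  by case/andP => gY /(trace_orth_eq0 gY) ->.
have g_onto : (f @: g)%VS = fullv.
  by apply/eqP; rewrite eqEdim subvf dimvf limg_dim_eq // /dim /= mul1n.
have /memv_imgP[G gG fG] : f X \in (f @: g)%VS by rewrite g_onto memvf.
by exists G; rewrite gG memv_ker linearB /= fG subrr.
Qed.

End TraceOrthogonal.

Definition stair (V : zmodType) (l : nat) (c d : V) (j : nat) : V :=
  if j == l then d else if (1 <= j < l)%N then c else 0.

Section Stair.
Variables (V : zmodType) (l : nat) (c d : V).

Lemma stair_lt j : (1 <= j < l)%N -> stair l c d j = c.
Proof. by move=> /andP[j1 jl]; rewrite /stair ltn_eqF // j1 jl. Qed.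

Lemma stair_at : stair l c d l = d.
Proof. by rewrite /stair eqxx. Qed.

Lemma stair_gt j : (l < j)%N -> stair l c d j = 0.
Proof. by move=> lj; rewrite /stair gtn_eqF // [(j < l)%N]ltnNge (ltnW lj) andbF. Qed.

Lemma sum_stair_gt m n : (l < m)%N -> \sum_(m <= j < n) stair l c d j = 0.
Proof.
move=> lm; rewrite big_nat_cond big1 // => j /andP[/andP[mj _] _].
by rewrite stair_gt // (leq_trans lm mj).
Qed.

End Stair.

Section PoissonTensors.
Variables (K : fieldType) (r N : nat) (A : nat -> 'M[K]_r).
Implicit Types (G H : nat -> 'M[K]_r) (C D : 'M[K]_r).

Lemma RopB G H i : Rop N A (fun j => G j - H j) i = Rop N A G i - Rop N A H i.
Proof.
rewrite /Rop /= lieBr [X in _ + X = _](eq_bigr _ (fun j _ => lieBr _ _ _)) sumrB.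
exact: addrBDB.
Qed.

Lemma memv_Rop (g V : {vspace 'M[K]_r}) G i :
    (forall a v, a \in g -> v \in V -> lie a v \in V) ->
    (forall j, (1 <= j <= N)%N -> A j \in g) ->
    (forall j, (1 <= j <= N)%N -> G j \in V) ->
  (1 <= i <= N)%N -> Rop N A G i \in V.
Proof.
move=> gV gA VG /andP[i1 iN]; apply: memvD.
  apply: gV; last by apply: VG; rewrite i1.
  apply: memvB; first by apply/memvZ/gA; rewrite i1.
  by rewrite big_nat_cond; apply: memv_suml => k /andP[/andP[k1 ki] _]; apply: gA; lia.
rewrite big_nat_cond; apply: memv_suml => j /andP[/andP[j1 jN] _].
by apply: gV; [apply: gA | apply: VG]; lia.
Qed.

Lemma Rop_split G i : (1 <= i <= N)%N ->
  Rop N A G i = (i.-1)%:R *: lie (A i) (G i) - lie (Bl A i) (G i)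
                + (\sum_(1 <= j < i) lie (A j) (G j)
                   + lie (A i) (\sum_(i.+1 <= j < N.+1) G j)).
Proof.
move=> /andP[i1 iN]; rewrite /Rop lieBl lieZl -/(Bl A i).
rewrite (big_cat_nat _ (n := i)) // ?(leq_trans iN) //.
rewrite (big_ltn_cond (m := i)) ?ltnS // eqxx /=; congr (_ + (_ + _)).
  rewrite big_mkcond; apply: eq_big_nat => j /andP[_ ji].
  by rewrite ltn_eqF //= (minn_idPr (ltnW ji)).
rewrite big_mkcond lie_sumr; apply: eq_big_nat => j /andP[ij _].
by rewrite gtn_eqF //= (minn_idPl (ltnW ij)).
Qed.

Variable l : nat.

Lemma sum_lie_stair_le C D m : (m <= l)%N ->
  \sum_(1 <= j < m) lie (A j) (stair l C D j) = lie (Bl A m) C.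
Proof.
move=> ml; rewrite lie_suml; apply: eq_big_nat => j /andP[j1 jm].
by rewrite stair_lt // j1 (leq_trans jm ml).
Qed.

Lemma sum_lie_stair_gt C D m : (1 <= l < m)%N ->
  \sum_(1 <= j < m) lie (A j) (stair l C D j) = lie (Bl A l) C + lie (A l) D.
Proof.
move=> /andP[l1 lm]; rewrite (big_cat_nat _ (n := l.+1)) // big_nat_recr //.
rewrite sum_lie_stair_le // stair_at big_nat_cond big1 /= ?addr0 // => j.
by case/andP => /andP[lj _] _; rewrite stair_gt // lie0r.
Qed.

Lemma sum_stair_tail C D i : (l <= N)%N ->
  \sum_(i.+1 <= j < N.+1) stair l C D j =
  if (i < l)%N then C *+ (l - i.+1) + D else 0.
Proof.
move=> lN; case: ltnP => [il | li]; last exact: sum_stair_gt.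
rewrite (big_cat_nat _ (n := l.+1)) ?ltnS ?(ltnW il) // big_nat_recr //=.
rewrite stair_at (@sum_stair_gt _ l C D l.+1) // /= addr0; congr (_ + _).
rewrite (eq_big_nat _ _ (F2 := fun=> C)) ?sumr_const_nat // => j /andP[ij jl].
by rewrite stair_lt // jl (leq_trans _ ij).
Qed.

Lemma Pop_stair_rec C D D' i : (2 <= l <= N)%N ->
    lie (A l) D + lie (Bl A l) C = 0 -> lie (A l) D' + lie (Bl A l) D = 0 ->
    (1 <= i <= N)%N ->
  Pop A (stair l D D') i =
  Rop N A (stair l C D) i - (l - 2)%:R *: Pop A (stair l C D) i.
Proof.
move=> /andP[l2 lN] comm_C comm_D iN.
have /andP[i1 _] := iN.
rewrite /Pop Rop_split // sum_stair_tail // !scaler_nat.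
case: (ltngtP i l) => [il | li | ->].
- rewrite !stair_lt ?i1 // (sum_lie_stair_le _ _ (ltnW il)) subrKA lieDr lieMnr.
  rewrite addrA -mulrnDr.
  have -> : (i.-1 + (l - i.+1) = l - 2)%N by lia.
  by rewrite addrAC subrr add0r.
- rewrite !stair_gt // sum_lie_stair_gt; last by rewrite (leq_trans _ l2).
  by rewrite !lie0r !mul0rn !subr0 add0r addr0 addrC comm_C.
- rewrite !stair_at sum_lie_stair_le // lie0r addr0.
  have -> : l.-1 = (l - 2).+1 by lia.
  rewrite mulrS addrAC [_ + _ - _ - _]addrAC addrK addrAC comm_C add0r.
  by apply/eqP; rewrite -addr_eq0 comm_D eqxx.
Qed.

End PoissonTensors.

Definition pencil (K : fieldType) (r : nat) (A : nat -> 'M[K]_r) (l : nat) :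
  'M[{poly K}]_r := 'X *: map_mx polyC (A l) + map_mx polyC (Bl A l).

Section Pencil.
Variables (K : fieldType) (r : nat) (A : nat -> 'M[K]_r) (l : nat).

Lemma Fab_pencil beta alpha :
  Fab l beta alpha A = coefmx alpha (pencil A l ^+ beta).
Proof. by apply/matrixP => i j; rewrite !mxE. Qed.

Lemma lie_coefmx_pencil n k :
  lie (A l) (coefmx k ('X *: pencil A l ^+ n))
  + lie (Bl A l) (coefmx k (pencil A l ^+ n)) = 0.
Proof.
set P := pencil A l; set W := P ^+ n.
have PW : P *m W = W *m P by rewrite mulmxE -exprS exprSr.
have PWE : coefmx k (P *m W) = A l *m coefmx k ('X *: W) + Bl A l *m coefmx k W.
  by rewrite /P /pencil mulmxDl raddfD /= -scalemxAl scalemxAr !coefmx_polyCl.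
have WPE : coefmx k (W *m P) = coefmx k ('X *: W) *m A l + coefmx k W *m Bl A l.
  by rewrite /P /pencil mulmxDr raddfD /= -scalemxAr scalemxAl !coefmx_polyCr.
by rewrite /lie addrACA -opprD -PWE -WPE PW subrr.
Qed.

Lemma Bl_upd i v :
  Bl (upd A i (A i + v)) l = Bl A l + (if (1 <= i < l)%N then v else 0).
Proof.
have updE k : upd A i (A i + v) k = A k + (if k == i then v else 0).
  by rewrite /upd; case: eqP => [->|]; rewrite ?addr0.
rewrite /Bl (eq_bigr _ (fun k _ => updE k)) big_split /=.
by rewrite -big_mkcond big_nat1_eq.
Qed.

Lemma pencil_upd i v :
  pencil (upd A i (A i + v)) l = pencil A l + stair l 1 'X i *: map_mx polyC v.
Proof.
rewrite /pencil Bl_upd /stair /upd; case: (eqVneq i l) => [->|il].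
  by rewrite ltnn andbF addr0 map_mxD scalerDr addrAC.
case: ifP => _; first by rewrite map_mxD scale1r addrA.
by rewrite addr0 scale0r addr0.
Qed.

End Pencil.

Section Gradients.
Variables (K : fieldType) (r : nat) (g : {vspace 'M[K]_r}).
Hypothesis K0 : [pchar K] =i pred0.

Definition represents_grad (F : (nat -> 'M[K]_r) -> K) A i (X : 'M[K]_r) :=
  forall Xi, Xi \in g -> exists q : {poly K},
    (forall t, F (upd A i (A i + t *: Xi)) = q.[t]) /\ q`_1 = \tr (X *m Xi).

Lemma is_gradP F A i X : represents_grad F A i X ->
  forall G, is_grad g F A i G <-> G \in g /\ G - X \in trace_orth g.
Proof.
move=> dF G; split=> [[gG dG] | [gG /trace_orthP GX0]].
  split=> //; apply/trace_orthP => Y gY.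
  have [q [Fq q1]] := dG Y gY; have [p [Fp p1]] := dF Y gY.
  have qp : q = p by apply: horner_inj_pchar0 => // t; rewrite -Fq Fp.
  by rewrite mulmxBl raddfB /= -q1 -p1 qp subrr.
split=> // Xi gXi; have [q [Fq q1]] := dF Xi gXi; exists q; split=> //; rewrite q1.
by apply/eqP; rewrite eq_sym -subr_eq0 -raddfB /= -mulmxBl GX0.
Qed.

Lemma is_diff_exists N F A (X : nat -> 'M[K]_r) : trace_nondeg g ->
    (forall i, (1 <= i <= N)%N -> represents_grad F A i (X i)) ->
  exists G, is_diff g N F A G.
Proof.
move=> g_nondeg dF; pose decomp i := trace_orth_decomp g_nondeg (X i).
exists (fun i => xchoose (decomp i)) => i iN.
by have /andP := xchooseP (decomp i); apply: (is_gradP (dF i iN) _).2.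
Qed.

End Gradients.

Section HamiltonianGradient.
Variables (K : fieldType) (r l beta : nat) (A : nat -> 'M[K]_r).
Local Notation W := (pencil A l ^+ beta.-1).

Definition Hgrad (alpha : nat) : nat -> 'M[K]_r :=
  stair l (beta%:R *: coefmx alpha W) (beta%:R *: coefmx alpha ('X *: W)).

Lemma represents_grad_Hab (g : {vspace 'M[K]_r}) alpha i : (0 < beta)%N ->
  represents_grad g (Hab l beta alpha) A i (Hgrad alpha i).
Proof.
move=> beta_gt0 Xi _; set Q := stair l 1 'X i *: map_mx polyC Xi.
exists (\poly_(m < beta.+1) \tr (coefmx alpha (mixed_pow (pencil A l) Q beta m))).
split=> [t | ].
  rewrite /Hab Fab_pencil pencil_upd map_mxZ scalerA mulrC -scalerA.
  rewrite exprD_mixed_pow !raddf_sum horner_poly /=; apply: eq_bigr => m _.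
  by rewrite -rmorphXn coefmx_polyCZ mxtraceZ mulrC.
rewrite coef_poly ltnS beta_gt0 mxtrace_coefmx mxtrace_mixed_pow1 coefMn.
rewrite /Q -scalemxAl scalemxAr -mxtrace_coefmx coefmx_polyCl mxtrace_mulC.
rewrite -mulr_natl -mxtraceZ scalemxAl; congr (\tr (_ *m Xi)).
rewrite /Hgrad /stair; case: ifP => // _.
by case: ifP => _; rewrite ?scale1r // scale0r raddf0 scaler0.
Qed.

Lemma Pop_Hgrad_rec N alpha i : (2 <= l <= N)%N -> (1 <= i <= N)%N ->
  Pop A (Hgrad alpha) i =
  Rop N A (Hgrad alpha.+1) i - (l - 2)%:R *: Pop A (Hgrad alpha.+1) i.
Proof.
move=> lN iN; rewrite /Hgrad coefmx_XZ.
apply: Pop_stair_rec => //; rewrite !lieZr -scalerDr ?lie_coefmx_pencil ?scaler0 //.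
by rewrite -coefmx_XZ lie_coefmx_pencil scaler0.
Qed.

End HamiltonianGradient.


Theorem lemma4 (K : fieldType) (r N : nat) (g : {vspace 'M[K]_(r, r)}) :
  [pchar K] =i pred0 ->
  lie_subalgebra g -> semisimple g -> trace_nondeg g ->
  (2 <= N)%N ->
  forall (l beta alpha : nat),
  (2 <= l <= N)%N -> (2 <= beta)%N -> (1 <= alpha <= beta)%N ->
  forall A : nat -> 'M[K]_(r, r), (forall i, (1 <= i <= N)%N -> A i \in g) ->
  (exists G, is_diff g N (Hab l beta alpha.-1) A G) /\
  (exists G', is_diff g N (Hab l beta alpha) A G') /\
  (forall G G', is_diff g N (Hab l beta alpha.-1) A G ->
                is_diff g N (Hab l beta alpha) A G' ->
   forall i, (1 <= i <= N)%N ->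
     Pop A G i = Rop N A G' i - (l - 2)%:R *: Pop A G' i).
Proof.
move=> K0 g_lie _ g_nondeg _ l beta alpha lN beta2 /andP[alpha1 _] A gA.
have dH b i : (1 <= i <= N)%N ->
    represents_grad g (Hab l beta b) A i (Hgrad l beta A b i).
  by move=> _; apply/represents_grad_Hab/ltnW.
split; [|split]; try exact: is_diff_exists (dH _).
case: alpha alpha1 => // a _ G G' dG dG' i iN.
have near_Hgrad b H : is_diff g N (Hab l beta b) A H -> forall j, (1 <= j <= N)%N ->
    H j \in g /\ H j - Hgrad l beta A b j \in trace_orth g.
  by move=> dH' j jN; apply: (is_gradP K0 (dH b j jN) _).1; apply: dH'.
have g_orth a' v : a' \in g -> v \in trace_orth g -> lie a' v \in trace_orth g.
  exact: lie_trace_orth.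
apply/subr0_eq/(trace_orth_eq0 g_nondeg).
  apply: memvB; first by apply: g_lie; [apply: gA | case: (near_Hgrad _ _ dG i iN)].
  apply: memvB; last by apply/memvZ/g_lie; [apply: gA | case: (near_Hgrad _ _ dG' i iN)].
  by apply: (memv_Rop _ gA) => // j jN; case: (near_Hgrad _ _ dG' j jN).
apply: (memv_residual (Pop_Hgrad_rec beta A a lN iN)).
- by rewrite /Pop -lieBr g_orth ?gA //; case: (near_Hgrad _ _ dG i iN).
- rewrite -RopB; apply: (memv_Rop _ gA) => // j jN.
  by case: (near_Hgrad _ _ dG' j jN).
- by rewrite /Pop -lieBr g_orth ?gA //; case: (near_Hgrad _ _ dG' i iN).
Qed.
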